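(* Let $(F,<_F)$ and $(G,<_G)$ be ordered groups and let $\prec$ be the ordering of $F*G$ described in the context. Then $\prec$ restricts to $<_F$ on $F$ and to $<_G$ on $G$, and for any automorphisms $\phi\colon F\to F$ and $\psi\colon G\to G$ preserving $<_F$ and $<_G$ respectively, the automorphism $\phi*\psi\colon F*G\to F*G$ preserves $\prec$.
   Context: An ordered group is a group with a strict total order invariant under left and right multiplication. Construction of $\prec$ on $F*G$: order $F\times G$ lexicographically ($(f,g)<(f',g')$ iff $f<_Ff'$, or $f=f'$ and $g<_Gg'$). In $R=\mathbb{Z}(F\times G)$ call a nonzero element positive if the coefficient of its largest group element is a positive integer. Let $\rho\colon F*G\to M_2(R[t])$ be the homomorphism with $\rho(f)=\begin{pmatrix} f&(f-1)t\\0&1\end{pmatrix}$ for $f\in F$, $\rho(g)=\begin{pmatrix}1&0\\(g-1)t&g\end{pmatrix}$ for $g\in G$; it is injective. Order the matrix positions as $(1,1)$, $(2,2)$, then the two off-diagonal positions in a fixed order. A nonzero $M=\sum_i M_it^i\in M_2(R[t])$ ($M_i\in M_2(R)$) is positive if for the least $n$ with $M_n\ne0$, the first nonzero entry of $M_n$ is positive in $R$. Set $x\prec y$ iff $\rho(y)-\rho(x)$ is positive. *)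

From HB Require Import structures.
From mathcomp Require Import all_boot all_order all_algebra.
From mathcomp Require Import monoid.

Set Implicit Arguments.
Unset Strict Implicit.
Unset Printing Implicit Defensive.

Import GRing.Theory Num.Theory.

Local Open Scope ring_scope.

Section Defs.

Definition is_group_order (F : groupType) (lt : F -> F -> Prop) : Prop :=
  [/\ (forall x, ~ lt x x),
      (forall x y z, lt x y -> lt y z -> lt x z),
      (forall x y, x <> y -> lt x y \/ lt y x),
      (forall x y z, lt x y -> lt (z * x)%g (z * y)%g) &
      (forall x y z, lt x y -> lt (x * z)%g (y * z)%g)].

Definition is_group_aut (F : groupType) (phi : F -> F) : Prop :=
  {morph phi : x y / (x * y)%g} /\ bijective phi.

(* The free product F * G, as the set of reduced words: finite sequences
   of nontrivial letters alternating between F and G.                 *)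
Variables F G : groupType.

Definition letter := (F + G)%type.

Definition letter_nontriv (l : letter) : bool :=
  match l with inl f => f != 1%g | inr g => g != 1%g end.

Definition letter_side (l : letter) : bool :=
  match l with inl _ => true | inr _ => false end.

Definition reduced (w : seq letter) : bool :=
  all letter_nontriv w && sorted (fun a b => letter_side a != letter_side b) w.

Definition free_prod := {w : seq letter | reduced w}.

Definition inF (f : F) : free_prod :=
  insubd (exist _ [::] isT : free_prod) [:: inl f].
Definition inG (g : G) : free_prod :=
  insubd (exist _ [::] isT : free_prod) [:: inr g].

(* phi * psi : F*G -> F*G acts letterwise on reduced words (for
   automorphisms phi, psi the image word is again reduced, so the
   default branch of insubd is never used). *)
Definition letter_map (phi : F -> F) (psi : G -> G) (l : letter) : letter :=
  match l with inl f => inl (phi f) | inr g => inr (psi g) end.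
Definition free_prod_map (phi : F -> F) (psi : G -> G) (w : free_prod)
  : free_prod := insubd w (map (letter_map phi psi) (val w)).

(* The ring R[t] with R = Z(F x G), elements given as formal finite sums
   of monomials  c * (f,g) * t^n  (c : int).                           *)
Definition monom := (int * ((F * G) * nat))%type.
Definition Rpoly := seq monom.

Definition coef (p : Rpoly) (k : F * G) (n : nat) : int :=
  \sum_(m <- p | (m.2.1 == k) && (m.2.2 == n)) m.1.

Definition padd (p q : Rpoly) : Rpoly := p ++ q.
Definition popp (p : Rpoly) : Rpoly := [seq (- m.1, m.2) | m <- p].
Definition pmul (p q : Rpoly) : Rpoly :=
  [seq (a.1 * b.1, ((a.2.1 * b.2.1)%g, (a.2.2 + b.2.2)%N)) | a <- p, b <- q].
Definition pmon (c : int) (k : F * G) (n : nat) : Rpoly := [:: (c, (k, n))].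

Record mx2 := Mx2 { m11 : Rpoly; m12 : Rpoly; m21 : Rpoly; m22 : Rpoly }.

Definition mx2_mul (A B : mx2) : mx2 :=
  Mx2 (padd (pmul (m11 A) (m11 B)) (pmul (m12 A) (m21 B)))
      (padd (pmul (m11 A) (m12 B)) (pmul (m12 A) (m22 B)))
      (padd (pmul (m21 A) (m11 B)) (pmul (m22 A) (m21 B)))
      (padd (pmul (m21 A) (m12 B)) (pmul (m22 A) (m22 B))).
Definition mx2_sub (A B : mx2) : mx2 :=
  Mx2 (padd (m11 A) (popp (m11 B))) (padd (m12 A) (popp (m12 B)))
      (padd (m21 A) (popp (m21 B))) (padd (m22 A) (popp (m22 B))).
Definition mx2_one : mx2 := Mx2 (pmon 1 (1%g, 1%g) 0) [::] [::] (pmon 1 (1%g, 1%g) 0).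

(* rho(f) = [[f, (f-1)t], [0, 1]],   rho(g) = [[1, 0], [(g-1)t, g]] *)
Definition rho_letter (l : letter) : mx2 :=
  match l with
  | inl f => Mx2 (pmon 1 (f, 1%g) 0)
                 (pmon 1 (f, 1%g) 1 ++ pmon (-1) (1%g, 1%g) 1)
                 [::] (pmon 1 (1%g, 1%g) 0)
  | inr g => Mx2 (pmon 1 (1%g, 1%g) 0) [::]
                 (pmon 1 (1%g, g) 1 ++ pmon (-1) (1%g, 1%g) 1)
                 (pmon 1 (1%g, g) 0)
  end.

Definition rho (w : free_prod) : mx2 :=
  foldr (fun l M => mx2_mul (rho_letter l) M) mx2_one (val w).

Variables (ltF : F -> F -> Prop) (ltG : G -> G -> Prop).

Definition lex_lt (k k' : F * G) : Prop :=
  ltF k.1 k'.1 \/ (k.1 = k'.1 /\ ltG k.2 k'.2).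

Definition R_pos (c : F * G -> int) : Prop :=
  exists k, 0 < c k /\ forall k', lex_lt k k' -> c k' = 0.

Definition entries (o12 : bool) (M : mx2) : seq Rpoly :=
  if o12 then [:: m11 M; m22 M; m12 M; m21 M]
  else [:: m11 M; m22 M; m21 M; m12 M].

Definition mx2_pos (o12 : bool) (M : mx2) : Prop :=
  let E := entries o12 M in
  exists n : nat,
    (forall m, (m < n)%N -> forall p k, p \in E -> coef p k m = 0) /\
    exists i : nat, (i < size E)%N /\
      (forall j, (j < i)%N -> forall k, coef (nth [::] E j) k n = 0) /\
      R_pos (fun k => coef (nth [::] E i) k n).

Definition prec (o12 : bool) (x y : free_prod) : Prop :=
  mx2_pos o12 (mx2_sub (rho y) (rho x)).

End Defs.

From HB Require Import structures.
From mathcomp Require Import all_boot all_order all_algebra.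
From mathcomp Require Import monoid.
From Corelib Require Import Setoid.

(* Modulo t, rho(f) = diag(f, 1) and rho(g) = diag(1, g).  So for f <> f' the
   first nonzero entry of rho(f') - rho(f) is its (1,1) entry (f',1) - (f,1)
   in degree 0, positive iff f <_F f'; for g <> g' the (1,1) entry vanishes and
   the (2,2) entry (1,g') - (1,g) decides.  The automorphism phi * psi acts on
   rho(w) coefficientwise through the bijection phi x psi of F x G, which
   preserves the lexicographic order and hence positivity. *)

Set Implicit Arguments.
Unset Strict Implicit.
Unset Printing Implicit Defensive.

Import Order.TTheory GRing.Theory Num.Theory.

Local Open Scope ring_scope.

Section StrictTotalOrder.

Variables (T : eqType) (lt : T -> T -> Prop).
Hypothesis lt_irr : forall x, ~ lt x x.
Hypothesis lt_trans : forall x y z, lt x y -> lt y z -> lt x z.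
Hypothesis lt_total : forall x y, x <> y -> lt x y \/ lt y x.

Lemma not_lt_iff x y : x <> y -> ~ lt y x <-> lt x y.
Proof.
move=> nxy; split=> [nyx | lxy lyx]; last exact: lt_irr (lt_trans lxy lyx).
by case: (lt_total nxy).
Qed.

Lemma mono_lt_reflect (h : T -> T) :
  (forall x y, lt x y -> lt (h x) (h y)) -> forall x y, lt (h x) (h y) -> lt x y.
Proof.
move=> h_mono x y lhxy; case: (eqVneq x y) => [exy | /eqP nxy].
  by rewrite exy in lhxy; case: (lt_irr lhxy).
by apply/not_lt_iff => // /h_mono lhyx; apply: lt_irr (lt_trans lhxy lhyx).
Qed.

End StrictTotalOrder.

Lemma morphg1 (H K : groupType) (h : H -> K) :
  {morph h : x y / (x * y)%g} -> h 1%g = 1%g.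
Proof. by move=> hM; apply: (@mulgI _ (h 1%g)); rewrite -hM !mulg1. Qed.

Section Coefficients.

Variables F G : groupType.
Implicit Types (p q : Rpoly F G) (k : F * G) (n : nat).

Lemma mulg_pair (a b : F * G) : (a * b)%g = ((a.1 * b.1)%g, (a.2 * b.2)%g).
Proof. by case: a; case: b. Qed.

Lemma coef_nil k n : coef ([::] : Rpoly F G) k n = 0.
Proof. by rewrite /coef big_nil. Qed.

Lemma coef_cons c k0 n0 p k n :
  coef ((c, (k0, n0)) :: p) k n = ((k == k0) && (n == n0))%:Z * c + coef p k n.
Proof.
rewrite /coef big_cons /= (eq_sym k0) (eq_sym n0).
by case: ifP; rewrite ?mul1r ?mul0r ?add0r.
Qed.

Lemma coef_cat p q k n : coef (p ++ q) k n = coef p k n + coef q k n.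
Proof. by rewrite /coef big_cat. Qed.

Lemma coef_popp p k n : coef (popp p) k n = - coef p k n.
Proof. by rewrite /coef big_map sumrN. Qed.

Lemma coef_psub p q k n : coef (padd p (popp q)) k n = coef p k n - coef q k n.
Proof. by rewrite coef_cat coef_popp. Qed.

Lemma pmul0 p : pmul p [::] = [::].
Proof. by elim: p. Qed.

Definition coefE := (coef_cat, coef_cons, coef_nil, pmul0, mulg_pair).

Lemma coef_rho_inF_11 (f : F) k n :
  coef (m11 (rho (inF G f))) k n = ((k == (f, 1%g)) && (n == 0%N))%:Z.
Proof.
rewrite /rho /inF val_insubd /reduced /=.
by case: eqP => [->|_]; rewrite !coefE ?mulg1 ?mulr1 ?addr0.
Qed.

Lemma coef_rho_inG_11 (g : G) k n :
  coef (m11 (rho (inG F g))) k n = ((k == (1%g, 1%g)) && (n == 0%N))%:Z.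
Proof.
rewrite /rho /inG val_insubd /reduced /=.
by case: eqP => [->|_]; rewrite !coefE ?mulg1 ?mulr1 ?addr0.
Qed.

Lemma coef_rho_inG_22 (g : G) k n :
  coef (m22 (rho (inG F g))) k n = ((k == (1%g, g)) && (n == 0%N))%:Z.
Proof.
rewrite /rho /inG val_insubd /reduced /=.
by case: eqP => [->|_]; rewrite !coefE ?mulg1 ?mulr1 ?addr0.
Qed.

End Coefficients.

Section Positivity.

Variables (F G : groupType) (ltF : F -> F -> Prop) (ltG : G -> G -> Prop).
Implicit Types (c d : F * G -> int) (M : mx2 F G).

Lemma eq_R_pos c d : c =1 d -> R_pos ltF ltG c <-> R_pos ltF ltG d.
Proof.
move=> ecd; split=> -[k [ck_gt0 ck']]; exists k.
  by split=> [|k' /ck']; rewrite -?ecd.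
by split=> [|k' /ck']; rewrite ?ecd.
Qed.

Lemma R_pos_eq0 c : c =1 (fun=> 0) -> ~ R_pos ltF ltG c.
Proof. by move=> c0 [k]; rewrite c0 ltxx => -[]. Qed.

Lemma R_pos_delta_sub (a b : F * G) :
  (forall k, ~ lex_lt ltF ltG k k) -> a != b ->
  R_pos ltF ltG (fun k => (k == a)%:Z - (k == b)%:Z) <-> ~ lex_lt ltF ltG a b.
Proof.
move=> lex_irr nab; split=> [[k [ck_gt0 ck']] lab | nlab].
  case: (eqVneq k a) => [eka | nka].
    by move: (ck' b); rewrite eka eqxx eq_sym (negbTE nab) => /(_ lab) /eqP.
  by move: ck_gt0; rewrite (negbTE nka) sub0r oppr_gt0; case: (k == b).
exists a; rewrite eqxx (negbTE nab) subr0; split=> // k' lak'.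
have nk'a : k' != a by apply: contraPneq lak' => ->; apply: lex_irr.
have nk'b : k' != b by apply: contraPneq nlab => <-.
by rewrite (negbTE nk'a) (negbTE nk'b) subrr.
Qed.

Lemma mx2_pos_eq0 o M :
  (forall p k n, p \in entries o M -> coef p k n = 0) -> ~ mx2_pos ltF ltG o M.
Proof.
move=> M0 [n [_ [i [ltiE [_ pos_i]]]]].
by apply: R_pos_eq0 pos_i => k; apply: M0; apply: mem_nth.
Qed.

Lemma entries_m11 o M : nth [::] (entries o M) 0 = m11 M.
Proof. by case: o. Qed.

Lemma entries_m22 o M : nth [::] (entries o M) 1 = m22 M.
Proof. by case: o. Qed.

Lemma m11_in_entries o M : m11 M \in entries o M.
Proof. by case: o; rewrite inE eqxx. Qed.

Lemma m22_in_entries o M : m22 M \in entries o M.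
Proof. by case: o; rewrite !inE eqxx ?orbT. Qed.

Lemma mx2_pos_m11 o M :
  (exists k, coef (m11 M) k 0 != 0) ->
  mx2_pos ltF ltG o M <-> R_pos ltF ltG (fun k => coef (m11 M) k 0).
Proof.
move=> [k0 nz11]; split=> [[n [Mlow [i [_ [Mbefore pos_i]]]]] | pos11].
  case: n Mlow Mbefore pos_i => [|n] Mlow Mbefore pos_i; last first.
    by case/eqP: nz11; apply: Mlow (m11_in_entries o M).
  case: i Mbefore pos_i => [|i] Mbefore pos_i; first by rewrite entries_m11 in pos_i.
  by case/eqP: nz11; rewrite -(entries_m11 o); apply: Mbefore.
exists 0%N; split=> //; exists 0%N; rewrite entries_m11.
by split=> //; case: o.
Qed.

Lemma mx2_pos_m22 o M :
  (forall k, coef (m11 M) k 0 = 0) -> (exists k, coef (m22 M) k 0 != 0) ->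
  mx2_pos ltF ltG o M <-> R_pos ltF ltG (fun k => coef (m22 M) k 0).
Proof.
move=> M11 [k0 nz22]; split=> [[n [Mlow [i [_ [Mbefore pos_i]]]]] | pos22].
  case: n Mlow Mbefore pos_i => [|n] Mlow Mbefore pos_i; last first.
    by case/eqP: nz22; apply: Mlow (m22_in_entries o M).
  case: i Mbefore pos_i => [|[|i]] Mbefore pos_i.
  - by rewrite entries_m11 in pos_i; case: (R_pos_eq0 M11 pos_i).
  - by rewrite entries_m22 in pos_i.
  - by case/eqP: nz22; rewrite -(entries_m22 o); apply: Mbefore.
exists 0%N; split=> //; exists 1%N; rewrite entries_m22.
split; first by case: o.
by split=> // -[|//] _ k; rewrite entries_m11.
Qed.

Lemma prec_irrefl o (x : free_prod F G) : ~ prec ltF ltG o x x.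
Proof.
apply: mx2_pos_eq0 => p k n.
by case: o; rewrite !inE => /or4P[] /eqP ->; rewrite coef_psub subrr.
Qed.

End Positivity.

Section Restriction.

Variables (F G : groupType) (ltF : F -> F -> Prop) (ltG : G -> G -> Prop).
Hypothesis ordF : is_group_order ltF.
Hypothesis ordG : is_group_order ltG.

Lemma lex_lt_irr k : ~ lex_lt ltF ltG k k.
Proof. by case: ordF ordG => irrF _ _ _ _ [irrG _ _ _ _] [/irrF | [_ /irrG]]. Qed.

Lemma prec_inF o (f f' : F) : prec ltF ltG o (inF G f) (inF G f') <-> ltF f f'.
Proof.
case: ordF ordG => irrF trF totF _ _ [irrG _ _ _ _].
have [<- | nff'] := eqVneq f f'; first by split=> [/prec_irrefl | /irrF].
have nk : (f', 1%g) != (f, 1%g) :> F * G by apply: contra_neq nff' => -[->].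
set M := mx2_sub (rho (inF G f')) (rho (inF G f)).
have diff11 k : coef (m11 M) k 0 = (k == (f', 1%g))%:Z - (k == (f, 1%g))%:Z.
  by rewrite coef_psub !coef_rho_inF_11 !andbT.
rewrite /prec mx2_pos_m11; last by exists (f', 1%g); rewrite diff11 eqxx (negbTE nk).
rewrite (eq_R_pos _ _ diff11) R_pos_delta_sub //; last exact: lex_lt_irr.
rewrite -(not_lt_iff irrF trF totF); last exact/eqP.
by split=> nlt lt; apply: nlt; [left | case: lt => // -[_ /irrG]].
Qed.

Lemma prec_inG o (g g' : G) : prec ltF ltG o (inG F g) (inG F g') <-> ltG g g'.
Proof.
case: ordF ordG => irrF _ _ _ _ [irrG trG totG _ _].
have [<- | ngg'] := eqVneq g g'; first by split=> [/prec_irrefl | /irrG].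
have nk : (1%g, g') != (1%g, g) :> F * G by apply: contra_neq ngg' => -[->].
set M := mx2_sub (rho (inG F g')) (rho (inG F g)).
have diff11 k : coef (m11 M) k 0 = 0 by rewrite coef_psub !coef_rho_inG_11 subrr.
have diff22 k : coef (m22 M) k 0 = (k == (1%g, g'))%:Z - (k == (1%g, g))%:Z.
  by rewrite coef_psub !coef_rho_inG_22 !andbT.
rewrite /prec mx2_pos_m22 //; last by exists (1%g, g'); rewrite diff22 eqxx (negbTE nk).
rewrite (eq_R_pos _ _ diff22) R_pos_delta_sub //; last exact: lex_lt_irr.
rewrite -(not_lt_iff irrG trG totG); last exact/eqP.
by split=> nlt lt; apply: nlt; [right | case: lt => [/irrF | -[]]].
Qed.

End Restriction.

Section CoefficientMap.

Variables (F G : groupType) (h : F * G -> F * G).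
Implicit Types (p q : Rpoly F G) (A B M : mx2 F G).

Definition Rpoly_map p : Rpoly F G := [seq (m.1, (h m.2.1, m.2.2)) | m <- p].

Definition mx2_map M : mx2 F G :=
  Mx2 (Rpoly_map (m11 M)) (Rpoly_map (m12 M)) (Rpoly_map (m21 M)) (Rpoly_map (m22 M)).

Lemma entries_mx2_map o M : entries o (mx2_map M) = map Rpoly_map (entries o M).
Proof. by case: o. Qed.

Lemma coef_Rpoly_map (h_inj : injective h) p k n :
  coef (Rpoly_map p) (h k) n = coef p k n.
Proof. by rewrite /coef big_map; apply: eq_bigl => m /=; rewrite (inj_eq h_inj). Qed.

Lemma Rpoly_map_cat p q : Rpoly_map (p ++ q) = Rpoly_map p ++ Rpoly_map q.
Proof. exact: map_cat. Qed.

Lemma Rpoly_map_popp p : Rpoly_map (popp p) = popp (Rpoly_map p).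
Proof. by rewrite /Rpoly_map /popp -!map_comp. Qed.

Lemma mx2_map_sub A B : mx2_map (mx2_sub A B) = mx2_sub (mx2_map A) (mx2_map B).
Proof. by rewrite /mx2_map /mx2_sub /padd /= !Rpoly_map_cat !Rpoly_map_popp. Qed.

Section LexReflecting.

Variables (ltF : F -> F -> Prop) (ltG : G -> G -> Prop).
Hypothesis h_bij : bijective h.
Hypothesis h_lex_reflect :
  forall k k', lex_lt ltF ltG (h k) (h k') -> lex_lt ltF ltG k k'.

Lemma R_pos_map (c d : F * G -> int) :
  (forall k, d (h k) = c k) -> R_pos ltF ltG c -> R_pos ltF ltG d.
Proof.
have [h' hK h'K] := h_bij.
move=> dh [k [ck_gt0 ck']]; exists (h k); rewrite dh; split=> // k' lk'.
by rewrite -(h'K k') dh; apply/ck'/h_lex_reflect; rewrite h'K.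
Qed.

Lemma mx2_pos_map o M : mx2_pos ltF ltG o M -> mx2_pos ltF ltG o (mx2_map M).
Proof.
have [h' hK h'K] := h_bij; have h_inj := can_inj hK.
have coef_map p k n : coef (Rpoly_map p) k n = coef p (h' k) n.
  by rewrite -{1}(h'K k) (coef_Rpoly_map h_inj).
move=> [n [Mlow [i [ltiE [Mbefore pos_i]]]]].
rewrite /mx2_pos entries_mx2_map size_map; exists n; split.
  by move=> m ltmn _ k /mapP[p pE ->]; rewrite coef_map; apply: Mlow.
exists i; split=> //; split.
  move=> j ltji k; rewrite (nth_map [::]) ?coef_map ?Mbefore //.
  exact: ltn_trans ltji ltiE.
by rewrite (nth_map [::]) //; apply: R_pos_map pos_i => k; rewrite coef_map hK.
Qed.

End LexReflecting.

Hypothesis hM : {morph h : x y / (x * y)%g}.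

Lemma Rpoly_map_pmul p q : Rpoly_map (pmul p q) = pmul (Rpoly_map p) (Rpoly_map q).
Proof.
elim: p => //= a p IHp; rewrite Rpoly_map_cat IHp /Rpoly_map -map_comp.
congr (_ ++ _); rewrite -map_comp.
by apply: eq_map => b /=; rewrite hM.
Qed.

Lemma mx2_map_mul A B : mx2_map (mx2_mul A B) = mx2_mul (mx2_map A) (mx2_map B).
Proof. by rewrite /mx2_map /mx2_mul /padd /= !Rpoly_map_cat !Rpoly_map_pmul. Qed.

Lemma mx2_map_one : mx2_map (mx2_one F G) = mx2_one F G.
Proof. by rewrite /mx2_map /= (morphg1 hM). Qed.

End CoefficientMap.

Section FreeProductMap.

Variables (F G : groupType) (phi : F -> F) (psi : G -> G).

Definition pair_map (k : F * G) : F * G := (phi k.1, psi k.2).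

Lemma val_free_prod_map (x : free_prod F G) :
  injective phi -> injective psi -> phi 1%g = 1%g -> psi 1%g = 1%g ->
  val (free_prod_map phi psi x) = map (letter_map phi psi) (val x).
Proof.
move=> phi_inj psi_inj phi1 psi1; rewrite /free_prod_map val_insubd.
case: x => w /= /andP[w_nontriv w_alt]; rewrite /reduced all_map sorted_map.
rewrite (sub_all _ w_nontriv) ?(sub_sorted _ w_alt) // => [[?|?] [?|?] // | [f|g] /=].
  by rewrite -{2}phi1 (inj_eq phi_inj).
by rewrite -{2}psi1 (inj_eq psi_inj).
Qed.

Hypothesis aut_phi : is_group_aut phi.
Hypothesis aut_psi : is_group_aut psi.

Lemma pair_map_morph : {morph pair_map : x y / (x * y)%g}.
Proof.
case: aut_phi aut_psi => phiM _ [psiM _] x y.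
by rewrite /pair_map !mulg_pair /= phiM psiM.
Qed.

Lemma pair_map_bij : bijective pair_map.
Proof.
case: aut_phi aut_psi => _ [phi' phiK phi'K] [_ [psi' psiK psi'K]].
exists (fun k => (phi' k.1, psi' k.2)) => -[f g].
  by rewrite /pair_map /= phiK psiK.
by rewrite /pair_map /= phi'K psi'K.
Qed.

Lemma rho_free_prod_map x : rho (free_prod_map phi psi x) = mx2_map pair_map (rho x).
Proof.
have phi1 := morphg1 (proj1 aut_phi); have psi1 := morphg1 (proj1 aut_psi).
have [phi_inj psi_inj] := (bij_inj (proj2 aut_phi), bij_inj (proj2 aut_psi)).
rewrite /rho val_free_prod_map //; elim: (val x) => [|l w IHw] /=.
  by rewrite mx2_map_one //; apply: pair_map_morph.
rewrite IHw mx2_map_mul; last exact: pair_map_morph.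
by congr mx2_mul; case: l => ? /=; rewrite /mx2_map /pair_map /= phi1 psi1.
Qed.

Variables (ltF : F -> F -> Prop) (ltG : G -> G -> Prop).
Hypothesis ordF : is_group_order ltF.
Hypothesis ordG : is_group_order ltG.
Hypothesis phi_mono : forall f f', ltF f f' -> ltF (phi f) (phi f').
Hypothesis psi_mono : forall g g', ltG g g' -> ltG (psi g) (psi g').

Lemma pair_map_lex_reflect k k' :
  lex_lt ltF ltG (pair_map k) (pair_map k') -> lex_lt ltF ltG k k'.
Proof.
case: ordF ordG => irrF trF totF _ _ [irrG trG totG _ _].
have phi_inj := bij_inj (proj2 aut_phi).
case=> [/(mono_lt_reflect irrF trF totF phi_mono) | [/phi_inj eq1]].
  by left.
by move/(mono_lt_reflect irrG trG totG psi_mono); right.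
Qed.

Lemma prec_free_prod_map o x y : prec ltF ltG o x y ->
  prec ltF ltG o (free_prod_map phi psi x) (free_prod_map phi psi y).
Proof.
rewrite /prec !rho_free_prod_map -mx2_map_sub.
exact/mx2_pos_map/pair_map_lex_reflect/pair_map_bij.
Qed.

End FreeProductMap.

Theorem corollary4p1 (F G : groupType)
    (ltF : F -> F -> Prop) (ltG : G -> G -> Prop) (o12 : bool) :
  is_group_order ltF -> is_group_order ltG ->
  (forall f f' : F, prec ltF ltG o12 (inF G f) (inF G f') <-> ltF f f') /\
  (forall g g' : G, prec ltF ltG o12 (inG F g) (inG F g') <-> ltG g g') /\
  (forall (phi : F -> F) (psi : G -> G),
     is_group_aut phi -> is_group_aut psi ->
     (forall f f', ltF f f' -> ltF (phi f) (phi f')) ->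
     (forall g g', ltG g g' -> ltG (psi g) (psi g')) ->
     forall x y : free_prod F G,
       prec ltF ltG o12 x y ->
       prec ltF ltG o12 (free_prod_map phi psi x) (free_prod_map phi psi y)).
Proof.
move=> ordF ordG; split; first by move=> f f'; apply: prec_inF.
split; first by move=> g g'; apply: prec_inG.
by move=> phi psi aut_phi aut_psi phi_mono psi_mono x y; apply: prec_free_prod_map.
Qed.
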